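(* Let $f:2^N\to\mathbb R$ be a monotone submodular function with curvature $c$, and let $\mathcal D$ be a product distribution on $2^N$ with bounded marginals. Then \textsc{MaxMargCont} is a $((1-c)^2-o(1))$-OPS algorithm: given a sufficiently large polynomial number of samples $(S_j,f(S_j))$ with $S_j$ i.i.d. from $\mathcal D$, with probability at least $1-\delta$ ($\delta\in[0,1)$ a constant) it returns a set $S$ with $|S|=k$ and $f(S)\ge((1-c)^2-o(1))\max_{T:|T|\le k}f(T)$.
   Context: $N=\{e_1,\dots,e_n\}$. $f_S(e)=f(S\cup\{e\})-f(S)$; $f$ is monotone if $f_S(e)\ge0$ and submodular if $f_S(e)\ge f_T(e)$ for all $S\subseteq T$. The curvature of $f$ is $c=1-\min_{e\in N,S\subseteq N}f_{S\setminus\{e\}}(e)/f(\{e\})$. A product distribution includes each element independently; it has bounded marginals if for every $e$, both $\Pr[e\in S]$ and $\Pr[e\notin S]$ ($S\sim\mathcal D$) lie between $1/\mathrm{poly}(n)$ and $1-1/\mathrm{poly}(n)$. \textsc{MaxMargCont}: for each $i$, let $\mathcal S_i$ (resp. $\mathcal S_{-i}$) be the samples containing (resp. not containing) $e_i$, compute $\hat v_i=\frac{1}{|\mathcal S_i|}\sum_{S\in\mathcal S_i}f(S)-\frac{1}{|\mathcal S_{-i}|}\sum_{S\in\mathcal S_{-i}}f(S)$, and return $\arg\max_{|T|=k}\sum_{e_i\in T}\hat v_i$. *)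

From HB Require Import structures.
From mathcomp Require Import all_boot all_order all_algebra.
From mathcomp Require Import reals.
Set Implicit Arguments. Unset Strict Implicit. Unset Printing Implicit Defensive.
Import Order.TTheory GRing.Theory Num.Theory.
Local Open Scope ring_scope.

Section OPS.
Variables (R : realType) (n : nat).
Implicit Types (f : {set 'I_n} -> R) (S T : {set 'I_n}) (i : 'I_n).

Definition marg f S i : R := f (i |: S) - f S.

Definition monotone f : Prop := forall S i, 0 <= marg f S i.

Definition submodular f : Prop :=
  forall S T i, S \subset T -> marg f T i <= marg f S i.

(* curvature c = 1 - min_{e, S} f_{S \ {e}}(e) / f({e}).
   The finite min is taken with seed 1; for nonnegative monotone submodular f
   every ratio is <= 1, so the seed only matters when n = 0. *)
Definition curvature f : R :=
  1 - \big[Num.min/1]_(i : 'I_n) \big[Num.min/1]_(S : {set 'I_n})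
        (marg f (S :\ i) i / f [set i]).

Definition prod_dist (p : 'I_n -> R) S : R :=
  \prod_(i < n) (if i \in S then p i else 1 - p i).

Definition bounded_marginals (a : nat) (p : 'I_n -> R) : Prop :=
  forall i, (n%:R ^+ a)^-1 <= p i /\ p i <= 1 - (n%:R ^+ a)^-1.

Definition sample_prob (m : nat) (p : 'I_n -> R)
    (E : {ffun 'I_m -> {set 'I_n}} -> bool) : R :=
  \sum_(s : {ffun 'I_m -> {set 'I_n}} | E s) \prod_(j < m) prod_dist p (s j).

Definition vhat m f (s : {ffun 'I_m -> {set 'I_n}}) i : R :=
  (\sum_(j < m | i \in s j) f (s j)) / #|[set j : 'I_m | i \in s j]|%:R
  - (\sum_(j < m | i \notin s j) f (s j)) / #|[set j : 'I_m | i \notin s j]|%:R.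

(* T is a possible output of MaxMargCont (any arg max, ties arbitrary) *)
Definition maxmargcont_output m f (s : {ffun 'I_m -> {set 'I_n}}) (k : nat) T
    : bool :=
  (#|T| == k) &&
  [forall T' : {set 'I_n}, (#|T'| == k) ==>
     (\sum_(i in T') vhat f s i <= \sum_(i in T) vhat f s i)].

Definition opt f (k : nat) : R := \big[Num.max/f set0]_(T : {set 'I_n} | (#|T| <= k)%N) f T.

Definition good_event m f (k : nat) (alpha : R)
    (s : {ffun 'I_m -> {set 'I_n}}) : bool :=
  [forall T : {set 'I_n}, maxmargcont_output f s k T ==> (alpha * opt f k <= f T)].

End OPS.

From HB Require Import structures.
From mathcomp Require Import all_boot all_order all_algebra.
From mathcomp Require Import reals.
From mathcomp Require Import ring lra zify.
Set Implicit Arguments. Unset Strict Implicit. Unset Printing Implicit Defensive.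
Import Order.TTheory GRing.Theory Num.Theory.
Local Open Scope ring_scope.

(* For e outside S the marginal f_S(e) lies between (1 - c) f({e}) and f({e}),
   hence so does its mean v_e = E[f_S(e) | e \notin S].  Under a product
   distribution v_e is the difference of the conditional means of f(S) given
   e \in S and given e \notin S, and vhat_e is the difference of the matching
   ratios of empirical sums; by Chebyshev and a union bound over the 4n sums,
   every |vhat_e - v_e| is at most eta with high probability once
   m >= n^(2a+6).  A top-k set T for vhat then satisfies
     f(T) >= (1-c) sum_T f({e}) >= (1-c) sum_T v_e >= (1-c) sum_T* v_e - 2k eta
          >= (1-c)^2 sum_T* f({e}) - 2k eta >= (1-c)^2 OPT - 2k eta
   for a k-set T* containing an optimum (subadditivity), and
   2k eta <= eps OPT because f(N) <= n OPT. *)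

Lemma finset_ind (T : finType) (P : {set T} -> Prop) :
  P set0 -> (forall (x : T) (A : {set T}), x \notin A -> P A -> P (x |: A)) ->
  forall A, P A.
Proof.
move=> P0 PU1 A; elim: {A}#|A| {-2}A (erefl #|A|) => [|k IHk] A cardA.
  by move/eqP: cardA; rewrite cards_eq0 => /eqP ->.
have /set0Pn[x xA] : A != set0 by rewrite -card_gt0 cardA.
rewrite -(setD1K xA); apply: PU1; first by rewrite !inE eqxx.
by apply: IHk; move: cardA; rewrite (cardsD1 x A) xA add1n => -[].
Qed.

Lemma extend_to_card (T : finType) (A : {set T}) (k : nat) :
  (#|A| <= k <= #|T|)%N -> exists2 B : {set T}, A \subset B & #|B| = k.
Proof.
case/andP=> Ak kT; pose s := take (k - #|A|) (enum (~: A)).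
exists (A :|: [set x in s]); first exact: subsetUl.
have AsI0 : A :&: [set x in s] = set0.
  apply/setP => x; rewrite !inE; apply/andP => -[xA /mem_take].
  by rewrite mem_enum inE xA.
have /card_uniqP card_s : uniq s by rewrite take_uniq ?enum_uniq.
rewrite cardsU AsI0 cards0 subn0 cardsE card_s size_take.
rewrite -cardE; have := cardsC A.
case: ltnP; lia.
Qed.

Section Submodular.
Variables (R : realType) (n : nat) (f : {set 'I_n} -> R).
Hypotheses (f_ge0 : forall S, 0 <= f S) (fmon : monotone f) (fsub : submodular f).
Implicit Types (S T A : {set 'I_n}) (i : 'I_n).

Lemma monotone_subset S T : S \subset T -> f S <= f T.
Proof.
move=> sST; rewrite -(setID T S) (setIidPr sST).
elim/finset_ind: (T :\: S) => [|x A _ IH]; first by rewrite setU0.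
by apply: le_trans IH _; rewrite setUCA -subr_ge0; apply: fmon.
Qed.

Lemma marg_le_singleton S i : marg f S i <= f [set i].
Proof.
apply: le_trans (fsub i (sub0set S)) _.
by rewrite /marg setU0 lerBlDr lerDl.
Qed.

Lemma le_sum_marg0 A : f A <= f set0 + \sum_(i in A) marg f set0 i.
Proof.
elim/finset_ind: A => [|x A xA IH]; first by rewrite big_set0 addr0.
rewrite (big_setD1 x) ?setU11 //= setU1K // addrCA.
by rewrite -[f _](subrK (f A)) lerD // fsub ?sub0set.
Qed.

Lemma le_sum_singletons A : A != set0 -> f A <= \sum_(i in A) f [set i].
Proof.
rewrite -card_gt0 => A_gt0; apply: le_trans (le_sum_marg0 A) _.
rewrite /marg (eq_bigr (fun i => f [set i] - f set0)) => [|i _]; last by rewrite setU0.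
rewrite sumrB sumr_const addrCA gerDl subr_le0.
move: A_gt0; case: #|A| => // k _; by rewrite mulrS lerDl mulrn_wge0.
Qed.

Lemma curvature_ge0 : 0 <= curvature f.
Proof.
rewrite subr_ge0; elim/big_rec: _ => // i x _ x_le1.
by rewrite ge_min x_le1 orbT.
Qed.

Lemma curvature_le1 : curvature f <= 1.
Proof.
rewrite lerBlDr lerDl; apply: le_bigmin => // i _; apply: le_bigmin => // S _.
exact: divr_ge0.
Qed.

Lemma curvature_marg A i : i \notin A -> (1 - curvature f) * f [set i] <= marg f A i.
Proof.
move=> iA; have ratio_ge : 1 - curvature f <= marg f A i / f [set i].
  rewrite /curvature opprB addrC subrK.
  apply: le_trans (bigmin_le _ i _) _; apply: le_trans (bigmin_le _ A _) _.
  by rewrite (setDidPl _) // disjoint_sym disjoints1.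
have [->|fi_neq0] := eqVneq (f [set i]) 0; first by rewrite mulr0; apply: fmon.
by rewrite -ler_pdivlMr // lt0r fi_neq0 f_ge0.
Qed.

Lemma curvature_sum A : (1 - curvature f) * \sum_(i in A) f [set i] <= f A.
Proof.
suff: f set0 + (1 - curvature f) * \sum_(i in A) f [set i] <= f A.
  by apply: le_trans; rewrite lerDr.
elim/finset_ind: A => [|x A xA IH]; first by rewrite big_set0 mulr0 addr0.
rewrite (big_setD1 x) ?setU11 //= setU1K // mulrDr addrCA.
by rewrite -[f (x |: A)](subrK (f A)) lerD // curvature_marg.
Qed.

End Submodular.

Section ProductDistribution.
Variables (R : realType) (n : nat) (p : 'I_n -> R).
Hypothesis p01 : forall i, 0 <= p i <= 1.
Implicit Types (S : {set 'I_n}) (i : 'I_n) (g : {set 'I_n} -> R).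

Definition expect g : R := \sum_S prod_dist p S * g S.

Definition prod_dist_off i S : R :=
  \prod_(l | l != i) (if l \in S then p l else 1 - p l).

Let factor_ge0 S l : 0 <= (if l \in S then p l else 1 - p l).
Proof. by have /andP[p_ge0 p_le1] := p01 l; case: ifP; rewrite ?subr_ge0. Qed.

Lemma prod_dist_ge0 S : 0 <= prod_dist p S.
Proof. by apply: prodr_ge0 => l _; apply: factor_ge0. Qed.

Lemma prod_dist_off_ge0 i S : 0 <= prod_dist_off i S.
Proof. by apply: prodr_ge0 => l _; apply: factor_ge0. Qed.

Lemma sum_prod_dist : \sum_S prod_dist p S = 1.
Proof.
have <- : \prod_(i < n) \sum_(b : bool) (if b then p i else 1 - p i) = 1.
  by apply: big1 => i _; rewrite big_bool /= addrC subrK.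
rewrite bigA_distr_bigA /= (reindex (fun g : {ffun 'I_n -> bool} => [set x | g x])).
  by apply: eq_bigr => g _; apply: eq_bigr => i _; rewrite inE.
apply: onW_bij; exists (fun S => [ffun x => x \in S]) => [g|S].
  by apply/ffunP => x; rewrite ffunE inE.
by apply/setP => x; rewrite inE ffunE.
Qed.

Lemma expect_bounded g B : (forall S, 0 <= g S <= B) -> 0 <= expect g <= B.
Proof.
move=> gB; rewrite sumr_ge0 => [|S _]; last first.
  by rewrite mulr_ge0 ?prod_dist_ge0 ?(andP (gB S)).1.
rewrite -[B]mul1r -sum_prod_dist mulr_suml ler_sum // => S _.
by rewrite ler_wpM2l ?prod_dist_ge0 ?(andP (gB S)).2.
Qed.

Lemma expect_in i g :
  expect (fun S : {set 'I_n} => (i \in S)%:R * g S) =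
  p i * \sum_(S : {set 'I_n} | i \notin S) prod_dist_off i S * g (i |: S).
Proof.
rewrite /expect (bigID (fun S : {set 'I_n} => i \in S)) /= [X in _ + X]big1;
  last by move=> S /negbTE->; rewrite mul0r mulr0.
rewrite addr0 (reindex_onto (fun S : {set 'I_n} => i |: S) (fun S => S :\ i));
  last by move=> S /setD1K.
rewrite mulr_sumr; apply: eq_big => [S|S /andP[_ /eqP <-]].
  rewrite setU11 /=; have [iS|iS] := boolP (i \in S); last by rewrite setU1K ?eqxx.
  by apply/negbTE/eqP => /setP/(_ i); rewrite !inE eqxx iS.
rewrite setU11 mul1r /prod_dist (bigD1 i) //= setU11 mulrA; congr (_ * _ * _).
by apply: eq_bigr => l li; rewrite in_setU1 (negbTE li).
Qed.

Lemma expect_notin i g :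
  expect (fun S : {set 'I_n} => (i \notin S)%:R * g S) =
  (1 - p i) * \sum_(S : {set 'I_n} | i \notin S) prod_dist_off i S * g S.
Proof.
rewrite /expect (bigID (fun S : {set 'I_n} => i \in S)) /= big1;
  last by move=> S ->; rewrite mul0r mulr0.
rewrite add0r mulr_sumr; apply: eq_bigr => S iS.
by rewrite iS mul1r /prod_dist (bigD1 i) //= (negbTE iS) mulrA.
Qed.

Lemma sum_prod_dist_off i : \sum_(S : {set 'I_n} | i \notin S) prod_dist_off i S = 1.
Proof.
have : expect (fun S : {set 'I_n} => (i \in S)%:R * 1) +
       expect (fun S : {set 'I_n} => (i \notin S)%:R * 1) = 1.
  rewrite /expect -big_split -[RHS]sum_prod_dist; apply: eq_bigr => S _.
  by case: (i \in S); rewrite /= ?mulr1 ?mulr0 ?addr0 ?add0r.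
rewrite expect_in expect_notin -mulrDl (addrC (p i)) subrK mul1r.
by under eq_bigr do rewrite mulr1.
Qed.

Lemma avg_off_bounded i g B : (forall S, 0 <= g S <= B) ->
  0 <= \sum_(S : {set 'I_n} | i \notin S) prod_dist_off i S * g S <= B.
Proof.
move=> gB; rewrite sumr_ge0 => [|S _]; last first.
  by rewrite mulr_ge0 ?prod_dist_off_ge0 ?(andP (gB S)).1.
rewrite -[B]mul1r -(sum_prod_dist_off i) mulr_suml ler_sum // => S _.
by rewrite ler_wpM2l ?prod_dist_off_ge0 ?(andP (gB S)).2.
Qed.

End ProductDistribution.

Lemma sqrB_le_bound (R : realDomainType) (a b B : R) :
  0 <= a <= B -> 0 <= b <= B -> (a - b) ^+ 2 <= B ^+ 2.
Proof. by move=> /andP[? ?] /andP[? ?]; nra. Qed.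

Section Samples.
Variables (R : realType) (n : nat) (p : 'I_n -> R) (m : nat).
Hypothesis p01 : forall i, 0 <= p i <= 1.
Local Notation sample := {ffun 'I_m -> {set 'I_n}}.
Local Notation weight s := (\prod_(j < m) prod_dist p (s j)).
Local Notation Pr := (@sample_prob R n m p).
Implicit Types (s : sample) (E : sample -> bool).

Let weight_ge0 s : 0 <= weight s.
Proof. by apply: prodr_ge0 => j _; apply: prod_dist_ge0. Qed.

Lemma sum_weight_prod (G : 'I_m -> {set 'I_n} -> R) :
  \sum_(s : sample) weight s * \prod_(j < m) G j (s j) = \prod_(j < m) expect p (G j).
Proof. by rewrite bigA_distr_bigA /=; apply: eq_bigr => s _; rewrite -big_split. Qed.

Lemma sample_probT : Pr xpredT = 1.
Proof.
have := sum_weight_prod (fun _ _ => 1).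
rewrite (eq_bigr (fun s => weight s)) => [|s _]; last by rewrite big1_eq mulr1.
rewrite /sample_prob => ->; apply: big1 => j _; rewrite -[RHS](sum_prod_dist p).
by apply: eq_bigr => S _; rewrite mulr1.
Qed.

Lemma sample_probC E : Pr E = 1 - Pr (predC E).
Proof. by rewrite -sample_probT /sample_prob [X in _ = X - _](bigID E) /= addrK. Qed.

Lemma le_sample_prob E1 E2 : (forall s, E1 s -> E2 s) -> Pr E1 <= Pr E2.
Proof.
move=> E12; rewrite /sample_prob [X in X <= _]big_mkcond [X in _ <= X]big_mkcond.
by apply: ler_sum => s _; case E1s: (E1 s); [rewrite E12 | case: ifP].
Qed.

Lemma sample_prob_orb E1 E2 : Pr (fun s => E1 s || E2 s) <= Pr E1 + Pr E2.
Proof.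
rewrite /sample_prob big_mkcond [X in _ <= X + _]big_mkcond.
rewrite [X in _ <= _ + X]big_mkcond -big_split /=.
by apply: ler_sum => s _; case: (E1 s); case: (E2 s); rewrite ?addr0 ?add0r ?lerDl.
Qed.

Lemma sample_prob_exists (K : finType) (E : K -> sample -> bool) :
  Pr (fun s => [exists k, E k s]) <= \sum_k Pr (E k).
Proof.
rewrite /sample_prob (exchange_big_dep xpredT) //= big_mkcond /=.
apply: ler_sum => s _; case: ifP => [/existsP[k Eks]|_]; last exact: sumr_ge0.
by rewrite (bigD1 k) //= lerDl sumr_ge0.
Qed.

Lemma sum_weight_cross (D : {set 'I_n} -> R) (j k : 'I_m) :
  \sum_(s : sample) weight s * (D (s j) * D (s k)) =
  \prod_(l < m) expect p (fun S =>
    (if l == j then D S else 1) * (if l == k then D S else 1)).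
Proof.
rewrite -sum_weight_prod; apply: eq_bigr => s _; congr (_ * _).
by rewrite big_split /= -!big_mkcond !big_pred1_eq.
Qed.

Lemma second_moment_sum (D : {set 'I_n} -> R) (B2 : R) :
  expect p D = 0 -> (forall S, D S ^+ 2 <= B2) ->
  \sum_(s : sample) weight s * (\sum_(j < m) D (s j)) ^+ 2 <= m%:R * B2.
Proof.
move=> D_centered D_sq_le.
have square s : weight s * (\sum_(j < m) D (s j)) ^+ 2 =
    \sum_(j < m) \sum_(k < m) weight s * (D (s j) * D (s k)).
  rewrite expr2 mulr_suml mulr_sumr; apply: eq_bigr => j _.
  by rewrite !mulr_sumr.
rewrite (eq_bigr _ (fun s _ => square s)) exchange_big /=.
rewrite mulr_natl -[m in _ *+ m]card_ord -sumr_const; apply: ler_sum => j _.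
rewrite exchange_big (bigD1 j) //= [X in _ + X]big1 => [|k kj]; last first.
  rewrite sum_weight_cross (bigD1 j) //= eqxx eq_sym (negbTE kj).
  suff -> : expect p (fun S => D S * 1) = 0 by rewrite mul0r.
  by rewrite -D_centered; apply: eq_bigr => S _; rewrite mulr1.
rewrite sum_weight_cross (bigD1 j) //= eqxx big1 => [|l lj]; last first.
  rewrite (negbTE lj) -[RHS](sum_prod_dist p).
  by apply: eq_bigr => S _; rewrite !mulr1.
rewrite mulr1 addr0.
suff /andP[] : 0 <= expect p (fun S => D S * D S) <= B2 by [].
by apply: expect_bounded => // S; rewrite -expr2 sqr_ge0 D_sq_le.
Qed.

Lemma chebyshev_sum (D : {set 'I_n} -> R) (B2 t : R) :
  expect p D = 0 -> (forall S, D S ^+ 2 <= B2) -> 0 < t ->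
  Pr (fun s => t < `|\sum_(j < m) D (s j)|) <= m%:R * B2 / t ^+ 2.
Proof.
move=> D_centered D_sq_le t_gt0; rewrite ler_pdivlMr ?exprn_gt0 //.
apply: le_trans (second_moment_sum D_centered D_sq_le).
rewrite /sample_prob big_mkcond mulr_suml; apply: ler_sum => s _.
case: ifP => [t_lt|_]; last by rewrite mul0r mulr_ge0 ?sqr_ge0.
have t_le := ltW t_lt; rewrite ler_wpM2l // -[X in _ <= X]real_normK ?num_real //.
by rewrite ler_sqr ?nnegrE ?normr_ge0 ?(ltW t_gt0).
Qed.

Lemma chebyshev_mean (h : {set 'I_n} -> R) (B z : R) :
  (forall S, 0 <= h S <= B) -> 0 < B -> 0 < z -> (0 < m)%N ->
  Pr (fun s => z * m%:R * B < `|\sum_(j < m) h (s j) - m%:R * expect p h|)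
  <= (z ^+ 2 * m%:R)^-1.
Proof.
move=> hB B_gt0 z_gt0 m_gt0.
have centered s : \sum_(j < m) h (s j) - m%:R * expect p h =
                  \sum_(j < m) (h (s j) - expect p h).
  by rewrite sumrB sumr_const card_ord mulr_natl.
apply: le_trans (le_sample_prob (E2 := fun s =>
  z * m%:R * B < `|\sum_(j < m) (h (s j) - expect p h)|) _) _ => [s|].
  by rewrite centered.
apply: le_trans (@chebyshev_sum (fun S => h S - expect p h) (B ^+ 2) _ _ _ _) _.
- rewrite /expect; under eq_bigr do rewrite mulrBr.
  by rewrite sumrB -mulr_suml sum_prod_dist mul1r subrr.
- by move=> S; apply: sqrB_le_bound; [apply: hB | apply: expect_bounded].
- by rewrite !mulr_gt0 ?ltr0n.
rewrite (_ : _ / _ = (z ^+ 2 * m%:R)^-1) //.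
by field; rewrite !lt0r_neq0 ?ltr0n.
Qed.

End Samples.

Lemma ratio_estimate (R : realFieldType) (num den a F m pr q z : R) :
  0 < m -> 0 < q -> q <= pr -> 0 < z -> z <= q / 2 -> 0 <= a <= F ->
  `|den - m * pr| <= z * m -> `|num - m * pr * a| <= z * m * F ->
  `|num / den - a| <= 4 * z * F / q.
Proof.
move=> m_gt0 q_gt0 q_le z_gt0 z_le /andP[a_ge0 a_le] den_close num_close.
have den_ge : m * q / 2 <= den.
  have : m * (q / 2) <= m * (pr - z) by rewrite ler_pM2l // lerBrDr; lra.
  by move: den_close; rewrite ler_norml mulrA => /andP[? _]; nra.
have den_gt0 : 0 < den by apply: lt_le_trans den_ge; rewrite divr_gt0 ?mulr_gt0.
have num_gap : `|num - a * den| <= 2 * z * m * F.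
  have -> : num - a * den = (num - m * pr * a) + a * (m * pr - den) by ring.
  apply: le_trans (ler_normD _ _) _; rewrite normrM ger0_norm // (distrC (m * pr)).
  have : a * `|den - m * pr| <= F * (z * m) by apply: ler_pM; rewrite ?normr_ge0.
  by move: num_close; lra.
have -> : num / den - a = (num - a * den) / den by field; rewrite lt0r_neq0.
rewrite normrM normfV (gtr0_norm den_gt0) ler_pdivrMr // (le_trans num_gap) //.
have m_le : m <= 2 * den / q by rewrite ler_pdivlMr //; lra.
have zF_ge0 : 0 <= 2 * z * F by nra.
have -> : 4 * z * F / q * den = 2 * z * F * (2 * den / q) by field; rewrite lt0r_neq0.
by rewrite mulrAC ler_wpM2l.
Qed.

Section Optimum.
Variables (R : realType) (n : nat) (f : {set 'I_n} -> R) (k : nat).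
Hypotheses (f_ge0 : forall S, 0 <= f S) (fmon : monotone f) (fsub : submodular f).

Lemma opt_attained : exists2 T0 : {set 'I_n}, (#|T0| <= k)%N & opt f k = f T0.
Proof.
apply: (big_ind (fun x => exists2 T0 : {set 'I_n}, (#|T0| <= k)%N & x = f T0)).
- by exists set0; rewrite ?cards0.
- move=> _ _ [T1 T1k ->] [T2 T2k ->].
  by rewrite maxEle; case: ifP; [exists T2 | exists T1].
- by move=> T Tk; exists T.
Qed.

Lemma le_opt (T : {set 'I_n}) : (#|T| <= k)%N -> f T <= opt f k.
Proof. exact: (le_bigmax_cond _ f). Qed.

Lemma opt_ge0 : 0 <= opt f k.
Proof. by have [T0 _ ->] := opt_attained. Qed.

Lemma opt_le_sum_singletons : (0 < k <= n)%N ->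
  exists2 T1 : {set 'I_n}, #|T1| = k & opt f k <= \sum_(i in T1) f [set i].
Proof.
case/andP=> k_gt0 k_le_n; have [T0 T0k ->] := opt_attained.
have [|T1 T01 T1k] := @extend_to_card _ T0 k; first by rewrite T0k card_ord.
exists T1 => //; apply: le_trans (monotone_subset fmon T01) _.
by apply: le_sum_singletons => //; rewrite -card_gt0 T1k.
Qed.

Lemma top_le_opt : (0 < k)%N -> (0 < n)%N -> f setT <= n%:R * opt f k.
Proof.
move=> k_gt0 n_gt0; apply: le_trans (le_sum_singletons f_ge0 fsub _) _.
  by rewrite -card_gt0 cardsT card_ord.
rewrite -[n in n%:R]card_ord -cardsT mulr_natl -sumr_const.
by apply: ler_sum => i _; apply: le_opt; rewrite cards1.
Qed.

End Optimum.

Section Selection.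
Variables (R : realType) (n : nat) (f : {set 'I_n} -> R) (k : nat).
Hypotheses (f_ge0 : forall S, 0 <= f S) (fmon : monotone f) (fsub : submodular f).
Variables (vh v : 'I_n -> R) (eta : R).
Hypotheses (vh_close : forall i, `|vh i - v i| <= eta)
  (v_ge : forall i, (1 - curvature f) * f [set i] <= v i)
  (v_le : forall i, v i <= f [set i]).

Lemma sum_estimate_close (T : {set 'I_n}) :
  `|\sum_(i in T) vh i - \sum_(i in T) v i| <= #|T|%:R * eta.
Proof.
rewrite -sumrB (_ : _ * eta = \sum_(i in T) eta); last by rewrite sumr_const mulr_natl.
by apply: le_trans (ler_norm_sum _ _ _) _; apply: ler_sum.
Qed.

Lemma top_k_estimate (T : {set 'I_n}) : #|T| = k ->
  (forall T' : {set 'I_n}, #|T'| = k -> \sum_(i in T') vh i <= \sum_(i in T) vh i) ->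
  (1 - curvature f) ^+ 2 * opt f k - 2 * k%:R * eta <= f T.
Proof.
move=> Tk T_max; have c_le1 := curvature_le1 f_ge0 fmon.
have c_ge0 := curvature_ge0 f; set c := curvature f in c_ge0 c_le1 *.
have [k0|k_gt0] := posnP k.
  have [T0] := opt_attained f k; rewrite k0 leqn0 cards_eq0 => /eqP-> ->.
  move/eqP: Tk; rewrite k0 cards_eq0 => /eqP->; rewrite mulr0 mul0r subr0.
  by rewrite ler_piMl ?f_ge0 //; nra.
have [|T1 T1k opt_le] := opt_le_sum_singletons f_ge0 fmon fsub (k := k).
  by rewrite k_gt0 -Tk -[n in (_ <= n)%N]card_ord max_card.
have := sum_estimate_close T; have := sum_estimate_close T1.
rewrite Tk T1k !ler_norml => /andP[T1_lo _] /andP[_ T_hi].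
have /card_gt0P[x _] : (0 < #|T|)%N by rewrite Tk.
have keta_ge0 : 0 <= k%:R * eta.
  by rewrite mulr_ge0 // (le_trans (normr_ge0 _) (vh_close x)).
have d_ge0 : 0 <= 1 - c by lra.
have gap : \sum_(i in T1) v i - 2 * k%:R * eta <= \sum_(i in T) v i.
  by have := T_max T1 T1k; lra.
have opt_le_sum_v : (1 - c) ^+ 2 * opt f k <= (1 - c) * \sum_(i in T1) v i.
  rewrite expr2 -mulrA ler_wpM2l // (le_trans (ler_wpM2l d_ge0 opt_le)) //.
  by rewrite mulr_sumr; apply: ler_sum.
have sum_v_le_fT : (1 - c) * \sum_(i in T) v i <= f T.
  apply: le_trans (curvature_sum f_ge0 fmon T).
  by rewrite ler_wpM2l //; apply: ler_sum.
nra.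
Qed.

End Selection.

Section ExpectedMarginal.
Variables (R : realType) (n : nat) (p : 'I_n -> R) (f : {set 'I_n} -> R).
Hypotheses (p01 : forall i, 0 <= p i <= 1).
Hypotheses (f_ge0 : forall S, 0 <= f S) (fmon : monotone f) (fsub : submodular f).

Definition exp_marg i : R :=
  \sum_(S : {set 'I_n} | i \notin S) prod_dist_off p i S * marg f S i.

Lemma exp_margE i :
  exp_marg i = \sum_(S : {set 'I_n} | i \notin S) prod_dist_off p i S * f (i |: S)
             - \sum_(S : {set 'I_n} | i \notin S) prod_dist_off p i S * f S.
Proof. by rewrite -sumrB; apply: eq_bigr => S _; rewrite mulrBr. Qed.

Lemma exp_marg_ge i : (1 - curvature f) * f [set i] <= exp_marg i.
Proof.
rewrite -[X in X <= _]mul1r -[X in X * _](sum_prod_dist_off p i) mulr_suml.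
apply: ler_sum => S iS.
by rewrite ler_wpM2l ?prod_dist_off_ge0 ?(curvature_marg f_ge0 fmon iS).
Qed.

Lemma exp_marg_le i : exp_marg i <= f [set i].
Proof.
rewrite -[X in _ <= X]mul1r -(sum_prod_dist_off p i) mulr_suml.
apply: ler_sum => S iS.
by rewrite ler_wpM2l ?prod_dist_off_ge0 ?(marg_le_singleton f_ge0 fsub).
Qed.

End ExpectedMarginal.

Lemma card_set_sum (R : pzSemiRingType) (T : finType) (P : pred T) :
  #|[set x | P x]|%:R = \sum_x (P x)%:R :> R.
Proof.
rewrite cardsE -sum1_card natr_sum big_mkcond /=.
by apply: eq_bigr => x _; rewrite unfold_in; case: (P x).
Qed.

Section Estimator.
Variables (R : realType) (n : nat) (p : 'I_n -> R) (m : nat) (f : {set 'I_n} -> R).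
Variables (q z : R).
Hypotheses (f_ge0 : forall S, 0 <= f S) (fmon : monotone f) (fsub : submodular f).
Hypotheses (q_gt0 : 0 < q) (p_bounded : forall i, q <= p i /\ p i <= 1 - q).
Hypotheses (z_gt0 : 0 < z) (z_le : z <= q / 2) (m_gt0 : (0 < m)%N) (F_gt0 : 0 < f setT).
Local Notation F := (f setT).
Local Notation sample := {ffun 'I_m -> {set 'I_n}}.
Implicit Types (i : 'I_n) (s : sample).

Local Notation Pr := (@sample_prob R n m p).

Let p01 i : 0 <= p i <= 1.
Proof.
have [q_le le_q] := p_bounded i.
by rewrite (le_trans (ltW q_gt0) q_le) (le_trans le_q) // gerBl ltW.
Qed.

Let f_bounded S : 0 <= f S <= F.
Proof. by rewrite f_ge0 monotone_subset ?subsetT. Qed.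

Definition mean_close (h : {set 'I_n} -> R) (B : R) s : bool :=
  `|\sum_(j < m) h (s j) - m%:R * expect p h| <= z * m%:R * B.

(* vhat is a difference of two ratios of these four empirical sums, see vhatE *)
Definition accurate i s : bool :=
  [&& mean_close (fun S => (i \in S)%:R * f S) F s,
      mean_close (fun S => (i \in S)%:R * 1) 1 s,
      mean_close (fun S => (i \notin S)%:R * f S) F s &
      mean_close (fun S => (i \notin S)%:R * 1) 1 s].

Lemma vhatE s i : vhat f s i =
  (\sum_(j < m) (i \in s j)%:R * f (s j)) / (\sum_(j < m) (i \in s j)%:R * 1) -
  (\sum_(j < m) (i \notin s j)%:R * f (s j)) / (\sum_(j < m) (i \notin s j)%:R * 1).
Proof.
rewrite /vhat !card_set_sum; congr (_ / _ - _ / _);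
  rewrite ?big_mkcond; apply: eq_bigr => j _;
  by case: (i \in s j); rewrite ?mul1r ?mul0r ?mulr1.
Qed.

Let expect_count_in i : expect p (fun S => (i \in S)%:R * 1) = p i.
Proof.
by rewrite expect_in; under eq_bigr do rewrite mulr1; rewrite sum_prod_dist_off mulr1.
Qed.

Let expect_count_notin i : expect p (fun S => (i \notin S)%:R * 1) = 1 - p i.
Proof.
by rewrite expect_notin; under eq_bigr do rewrite mulr1; rewrite sum_prod_dist_off mulr1.
Qed.

Lemma vhat_accurate i s :
  accurate i s -> `|vhat f s i - exp_marg p f i| <= 8 * z * F / q.
Proof.
case/and4P; rewrite /mean_close expect_in expect_notin expect_count_in expect_count_notin.
rewrite !mulr1 !mulrA => num_in den_in num_out den_out.
have [q_le le_q] := p_bounded i; have m_gt0' : 0 < m%:R :> R by rewrite ltr0n.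
have est_in := ratio_estimate m_gt0' q_gt0 q_le z_gt0 z_le
  (avg_off_bounded p01 i (fun S => f_bounded (i |: S))) den_in num_in.
have q_le' : q <= 1 - p i by lra.
have est_out := ratio_estimate m_gt0' q_gt0 q_le' z_gt0 z_le
  (avg_off_bounded p01 i f_bounded) den_out num_out.
have dist_diff (a b c d : R) : `|a - b - (c - d)| <= `|a - c| + `|b - d|.
  by rewrite (_ : a - b - (c - d) = (a - c) - (b - d)) ?ler_normB //; ring.
rewrite vhatE exp_margE; apply: le_trans (dist_diff _ _ _ _) _.
have -> : 8 * z * F / q = 4 * z * F / q + 4 * z * F / q by ring.
exact: lerD.
Qed.

Lemma prob_not_mean_close (h : {set 'I_n} -> R) (B : R) :
  (forall S, 0 <= h S <= B) -> 0 < B ->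
  Pr (fun s => ~~ mean_close h B s) <= (z ^+ 2 * m%:R)^-1.
Proof.
move=> hB B_gt0; rewrite /sample_prob; under eq_bigl do rewrite /mean_close -ltNge.
exact: (chebyshev_mean p01 hB B_gt0 z_gt0 m_gt0).
Qed.

Let indicator_bounded (b : bool) (x B : R) : 0 <= x <= B -> 0 <= b%:R * x <= B.
Proof.
move=> /andP[x_ge0 x_le].
by case: b; rewrite ?mul1r ?mul0r ?x_ge0 ?x_le // lexx (le_trans x_ge0 x_le).
Qed.

Lemma prob_inaccurate i : Pr (fun s => ~~ accurate i s) <= 4 * (z ^+ 2 * m%:R)^-1.
Proof.
have bad_sum (P : pred {set 'I_n}) :
    Pr (fun s => ~~ mean_close (fun S => (P S)%:R * f S) F s) <= (z ^+ 2 * m%:R)^-1.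
  exact: (prob_not_mean_close (fun S => indicator_bounded _ (f_bounded S)) F_gt0).
have bad_count (P : pred {set 'I_n}) :
    Pr (fun s => ~~ mean_close (fun S => (P S)%:R * 1) 1 s) <= (z ^+ 2 * m%:R)^-1.
  by apply: prob_not_mean_close ltr01 => S; rewrite indicator_bounded ?ler01 ?lexx.
rewrite /sample_prob; under eq_bigl do rewrite /accurate !negb_and.
rewrite (_ : 4 = 1 + (1 + (1 + 1))) // !mulrDl !mul1r.
apply: le_trans (sample_prob_orb p01 _ _) (lerD (bad_sum _) _).
apply: le_trans (sample_prob_orb p01 _ _) (lerD (bad_count _) _).
exact: le_trans (sample_prob_orb p01 _ _) (lerD (bad_sum _) (bad_count _)).
Qed.

Lemma prob_accurate :
  1 - n%:R * (4 * (z ^+ 2 * m%:R)^-1) <= Pr (fun s => [forall i, accurate i s]).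
Proof.
rewrite sample_probC lerB //.
have -> : n%:R * (4 * (z ^+ 2 * m%:R)^-1) = \sum_(i < n) 4 * (z ^+ 2 * m%:R)^-1.
  by rewrite sumr_const card_ord mulr_natl.
apply: le_trans (le_sample_prob p01 (E2 := fun s => [exists i, ~~ accurate i s]) _) _.
  by move=> s; rewrite /= negb_forall.
apply: le_trans (sample_prob_exists p01 _) _.
by apply: ler_sum => i _; apply: prob_inaccurate.
Qed.

Lemma accurate_good_event (k : nat) (eps : R) s :
  0 < eps -> 16 * n%:R ^+ 2 * z <= eps * q -> [forall i, accurate i s] ->
  good_event f k ((1 - curvature f) ^+ 2 - eps) s.
Proof.
move=> eps_gt0 z_small /forallP all_accurate.
apply/forallP => T; apply/implyP => /andP[/eqP Tk /forallP T_max].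
have := top_k_estimate f_ge0 fmon fsub
  (fun i => vhat_accurate (all_accurate i)) (exp_marg_ge p01 f_ge0 fmon)
  (exp_marg_le p01 f_ge0 fsub) Tk (fun T' T'k => implyP (T_max T') (introT eqP T'k)).
suff : 2 * k%:R * (8 * z * F / q) <= eps * opt f k by rewrite mulrBl; lra.
have [k0|k_gt0] := posnP k.
  by rewrite k0 mulr0 mul0r mulr_ge0 ?(ltW eps_gt0) ?(opt_ge0 _ f_ge0).
have k_le_n : (k <= n)%N by rewrite -Tk -[n in (_ <= n)%N]card_ord max_card.
have F_le := top_le_opt f_ge0 fsub k_gt0 (leq_trans k_gt0 k_le_n).
have kF_le : k%:R * F <= n%:R * (n%:R * opt f k).
  by apply: ler_pM; rewrite ?ler0n ?ler_nat ?(ltW F_gt0).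
have -> : 2 * k%:R * (8 * z * F / q) = 16 * z * (k%:R * F) / q by ring.
rewrite ler_pdivrMr //; apply: le_trans (ler_wpM2l _ kF_le) _.
  by rewrite mulr_ge0 // ltW.
have -> : 16 * z * (n%:R * (n%:R * opt f k)) = 16 * n%:R ^+ 2 * z * opt f k by ring.
by rewrite [X in _ <= X]mulrAC ler_wpM2r ?(opt_ge0 _ f_ge0).
Qed.

Lemma prob_good_event (k : nat) (eps : R) :
  0 < eps -> 16 * n%:R ^+ 2 * z <= eps * q ->
  1 - n%:R * (4 * (z ^+ 2 * m%:R)^-1) <=
  Pr (good_event f k ((1 - curvature f) ^+ 2 - eps)).
Proof.
move=> eps_gt0 z_small; apply: le_trans prob_accurate (le_sample_prob p01 _).
by move=> s; apply: (@accurate_good_event k eps s eps_gt0 z_small).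
Qed.

End Estimator.

Lemma sample_prob_good_event0 (R : realType) (n m k : nat) (p : 'I_n -> R)
    (f : {set 'I_n} -> R) (alpha : R) :
  (forall S, f S = 0) -> @sample_prob R n m p (good_event f k alpha) = 1.
Proof.
move=> f0; rewrite -(@sample_probT _ _ p m); apply: eq_bigl => s.
apply/forallP => T; apply/implyP => _.
by have [T0 _ ->] := opt_attained f k; rewrite !f0 mulr0.
Qed.

Lemma chebyshev_radius (R : realFieldType) (N e eps : R) (a : nat) :
  1 <= N -> 0 < e -> e <= 1 -> e <= eps ->
  let q := (N ^+ a)^-1 in let z := e * q / (16 * N ^+ 2) in
  [/\ 0 < q, 0 < z, z <= q / 2 & 16 * N ^+ 2 * z <= eps * q].
Proof.
move=> N_ge1 e_gt0 e_le1 e_le_eps q z; have N_gt0 : 0 < N by lra.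
have q_gt0 : 0 < q by rewrite invr_gt0 exprn_gt0.
have N2_gt0 : 0 < 16 * N ^+ 2 by rewrite mulr_gt0 ?exprn_gt0.
split=> //; first by rewrite divr_gt0 ?mulr_gt0.
  rewrite ler_pdivrMr //; have : 1 <= N ^+ 2 by rewrite exprn_ege1.
  by have := ler_piMl (ltW q_gt0) e_le1; nra.
by rewrite mulrC divfK ?ler_wpM2r ?(ltW q_gt0) ?lt0r_neq0.
Qed.

Lemma sample_size_bound (R : realFieldType) (N e delta M : R) (a : nat) :
  1 <= N -> 0 < e -> 0 < delta -> 1024 / (e ^+ 2 * delta) <= N -> N ^+ (2 * a + 6) <= M ->
  N * (4 * ((e * (N ^+ a)^-1 / (16 * N ^+ 2)) ^+ 2 * M)^-1) <= delta.
Proof.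
move=> N_ge1 e_gt0 delta_gt0 N_large M_large.
have N_gt0 : 0 < N by lra.
have Na_gt0 : 0 < N ^+ a by rewrite exprn_gt0.
set z := e * _ / _.
have zM_ge : e ^+ 2 * N ^+ 2 / 256 <= z ^+ 2 * M.
  have -> : e ^+ 2 * N ^+ 2 / 256 = z ^+ 2 * N ^+ (2 * a + 6).
    by rewrite /z exprD mulnC exprM; field; rewrite !lt0r_neq0.
  by rewrite ler_wpM2l ?sqr_ge0.
have lower_gt0 : 0 < e ^+ 2 * N ^+ 2 / 256 by rewrite divr_gt0 ?mulr_gt0 ?exprn_gt0.
have -> : N * (4 * (z ^+ 2 * M)^-1) = 4 * N / (z ^+ 2 * M) by ring.
rewrite ler_pdivrMr ?(lt_le_trans lower_gt0) //.
apply: le_trans _ (ler_wpM2l (ltW delta_gt0) zM_ge).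
move: N_large; rewrite ler_pdivrMr ?mulr_gt0 ?exprn_gt0 // => N_large.
have -> : delta * (e ^+ 2 * N ^+ 2 / 256) = N * (N * (e ^+ 2 * delta)) / 256 by ring.
by rewrite ler_pdivlMr //; nra.
Qed.

Theorem theorem4 (R : realType) (a : nat) (delta eps : R) :
  0 < delta < 1 -> 0 < eps ->
  exists n0 d : nat, forall n : nat, (n0 <= n)%N ->
  forall (k : nat) (f : {set 'I_n} -> R) (p : 'I_n -> R),
    (forall S, 0 <= f S) -> monotone f -> submodular f ->
    bounded_marginals a p ->
    forall m : nat, (n ^ d <= m)%N ->
      1 - delta <=
      @sample_prob R n m p (@good_event R n m f k ((1 - curvature f) ^+ 2 - eps)).
Proof.
move=> /andP[delta_gt0 _] eps_gt0; pose e := Num.min eps 1.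
have e_gt0 : 0 < e by rewrite lt_min eps_gt0 ltr01.
have [e_le_eps e_le1] : e <= eps /\ e <= 1 by rewrite !ge_min !lexx orbT.
pose N0 := 1024 / (e ^+ 2 * delta).
have N0_ge0 : 0 <= N0 by rewrite divr_ge0 // mulr_ge0 ?sqr_ge0 // ltW.
exists (maxn 1 (Num.bound N0)), (2 * a + 6)%N.
move=> n n_large k f p f_ge0 fmon fsub p_bounded m m_large.
have n_gt0 : (0 < n)%N by rewrite (leq_trans _ n_large) ?leq_maxl.
have n_ge1 : 1 <= n%:R :> R by rewrite ler1n.
have N0_le : N0 <= n%:R.
  apply: le_trans (ltW (archi_boundP N0_ge0)) _.
  by rewrite ler_nat (leq_trans _ n_large) ?leq_maxr.
have m_ge : n%:R ^+ (2 * a + 6) <= m%:R :> R by rewrite -natrX ler_nat.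
have m_gt0 : (0 < m)%N by rewrite (leq_trans _ m_large) // expn_gt0 n_gt0.
have [F0|F_neq0] := eqVneq (f setT) 0.
  rewrite sample_prob_good_event0 ?gerBl ?ltW // => S.
  by apply/eqP; rewrite eq_le f_ge0 -F0 monotone_subset ?subsetT.
have F_gt0 : 0 < f setT by rewrite lt0r F_neq0 f_ge0.
have [q_gt0 z_gt0 z_le z_small] := chebyshev_radius a n_ge1 e_gt0 e_le1 e_le_eps.
apply: le_trans (prob_good_event f_ge0 fmon fsub q_gt0 p_bounded z_gt0 z_le m_gt0 F_gt0
  k eps_gt0 z_small).
by rewrite lerB // sample_size_bound.
Qed.
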